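(* Let $\mathfrak g=\mathfrak k\oplus\mathfrak m$ be a Pauli-spanned Cartan decomposition, and let $b_1\neq b_2$ be two commuting Pauli strings in $\tilde{\mathfrak m}$ lying in the same connected component of the frustration graph of $\mathfrak g$. Then there exists a Pauli string $k\in\tilde{\mathfrak k}$ with $[k,b_1]\neq0$ and $[k,b_2]\neq0$; i.e. $\tilde{\mathfrak k}^{12}$ is non-empty.
   Context: Pauli strings on $n$ qubits are tensor products of $I,X,Y,Z$, not all identity; two Pauli strings either commute or anticommute. A Pauli-spanned Cartan decomposition is $\mathfrak g=\mathfrak k\oplus\mathfrak m\subseteq\mathfrak{su}(2^n)$ with $\mathfrak k=\mathrm{span}_{i\mathbb R}\tilde{\mathfrak k}$, $\mathfrak m=\mathrm{span}_{i\mathbb R}\tilde{\mathfrak m}$, $\mathfrak g=\mathrm{span}_{i\mathbb R}\tilde{\mathfrak g}$ with $\tilde{\mathfrak g}=\tilde{\mathfrak k}\sqcup\tilde{\mathfrak m}$ the set of all Pauli strings (up to phase) $\sigma$ with $i\sigma\in\mathfrak g$, and $[\mathfrak k,\mathfrak k]\subseteq\mathfrak k$, $[\mathfrak m,\mathfrak m]\subseteq\mathfrak k$, $[\mathfrak k,\mathfrak m]\subseteq\mathfrak m$. The frustration graph of $\mathfrak g$ has vertex set $\tilde{\mathfrak g}$, with edges between anticommuting pairs. For Pauli strings $b_1,b_2,\dots$ and disjoint index lists, $\tilde{\mathfrak k}^{i_1i_2\dots}_{j_1j_2\dots}$ is the set of $k\in\tilde{\mathfrak k}$ anticommuting with every $b_{i_p}$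 and commuting with every $b_{j_q}$ (no condition on other indices). *)

From mathcomp Require Import ssreflect ssrfun ssrbool eqtype ssrnat seq choice fintype finfun bigop finset fingraph.
Set Implicit Arguments. Unset Strict Implicit. Unset Printing Implicit Defensive.

(* A single-qubit Pauli letter (up to phase) is an element of 'I_4, encoded in
   symplectic form a = x + 2 z:  0 = I, 1 = X, 2 = Z, 3 = Y. *)
Definition pauli (n : nat) := {ffun 'I_n -> 'I_4}.

Definition xbit (a : 'I_4) : bool := odd a.
Definition zbit (a : 'I_4) : bool := 2 <= a.

(* Product of two single-qubit letters, up to phase (XOR of symplectic bits). *)
Definition pmul1 (a b : 'I_4) : 'I_4 :=
  inord ((xbit a (+) xbit b) + 2 * (zbit a (+) zbit b)).

Definition pmul n (p q : pauli n) : pauli n := [ffun i => pmul1 (p i) (q i)].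

Definition nontrivial n (p : pauli n) : bool := [exists i, p i != ord0].

Definition anticomm1 (a b : 'I_4) : bool := [&& a != ord0, b != ord0 & a != b].

Definition anticommute n (p q : pauli n) : bool :=
  odd #|[set i | anticomm1 (p i) (q i)]|.
Definition commute n (p q : pauli n) : bool := ~~ anticommute p q.

(* [span_iR A, span_iR B] ⊆ span_iR C for sets of Pauli strings: the commutator
   of two Pauli strings is 0 if they commute, and a nonzero real multiple of
   i * (a b) (a Pauli string up to phase) if they anticommute. *)
Definition lie_closed n (A B C : {set pauli n}) : Prop :=
  forall a b, a \in A -> b \in B -> anticommute a b -> pmul a b \in C.

(* Pauli-spanned Cartan decomposition g = k ⊕ m, given by the disjoint Pauli
   bases k~ = K and m~ = M (g~ = K ∪ M). *)
Definition pauli_cartan n (K M : {set pauli n}) : Prop :=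
  [/\ [disjoint K & M],
      (forall p, p \in K :|: M -> nontrivial p),
      lie_closed K K K,
      lie_closed M M K &
      lie_closed K M M].

Definition frustration n (G : {set pauli n}) : rel (pauli n) :=
  fun p q => [&& p \in G, q \in G & anticommute p q].

(* k~^{I}_{J}: elements of K anticommuting with every b_i (i in I) and
   commuting with every b_j (j in J). *)
Definition ksub n (K : {set pauli n}) (anti comm : seq (pauli n)) : {set pauli n} :=
  [set k in K | all (anticommute k) anti && all (commute k) comm].

From mathcomp Require Import ssreflect ssrfun ssrbool eqtype ssrnat seq choice fintype finfun bigop finset fingraph.
Set Implicit Arguments. Unset Strict Implicit.

(* Anticommutation is additive (over GF(2)) in each argument with respect to
   the product of Pauli strings, so the Lie closure of g~ forces every
   connected component of its frustration graph to have diameter at most 2: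
   if [w] is a common neighbour of [y] and [z], [x] is adjacent to [y] and
   commutes with [w], then [w y] is in g~ and is a common neighbour of [x]
   and [z].  Hence the distinct commuting [b1], [b2] have a common neighbour
   [w] in g~.  If [w] lies in k~ we are done; otherwise [w] is in m~ and
   [w b1], which lies in [m~, m~] within k~, anticommutes with both [b1] and
   [b2]. *)

Lemma anticomm1_pmul1l (a b c : 'I_4) :
  anticomm1 (pmul1 a b) c = anticomm1 a c (+) anticomm1 b c.
Proof.
case: a => [[|[|[|[|//]]]] ?]; case: b => [[|[|[|[|//]]]] ?];
case: c => [[|[|[|[|//]]]] ?];
by rewrite /anticomm1 /pmul1 /xbit /zbit /= -!val_eqE /= ?inordK.
Qed.

Lemma odd_card_addb (T : finType) (P Q : pred T) :
  odd #|[set i | P i (+) Q i]| = odd #|[set i | P i]| (+) odd #|[set i | Q i]|.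
Proof.
set A := [set i | P i]; set B := [set i | Q i].
have -> : [set i | P i (+) Q i] = (A :|: B) :\: (A :&: B).
  by apply/setP=> i; rewrite !inE; case: (P i); case: (Q i).
have sIU : A :&: B \subset A :|: B := subset_trans (subsetIl A B) (subsetUl A B).
rewrite -oddD -cardsUI -(cardsID (A :&: B) (A :|: B)) (setIidPr sIU).
by rewrite addnC addnA addnn oddD odd_double.
Qed.

Lemma anticommute_pmull n (a b c : pauli n) :
  anticommute (pmul a b) c = anticommute a c (+) anticommute b c.
Proof.
rewrite /anticommute -odd_card_addb; congr (odd _); apply: eq_card => i.
by rewrite !inE ffunE anticomm1_pmul1l.
Qed.

Lemma anticommuteC n (a b : pauli n) : anticommute a b = anticommute b a.
Proof.
rewrite /anticommute; congr (odd _); apply: eq_card => i; rewrite !inE /anticomm1.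
by case: (a i == ord0); case: (b i == ord0); rewrite ?andbF ?andbT //= eq_sym.
Qed.

Lemma anticommutexx n (a : pauli n) : anticommute a a = false.
Proof.
rewrite /anticommute (_ : [set i | _] = set0) ?cards0 //.
by apply/setP=> i; rewrite !inE /anticomm1 eqxx !andbF.
Qed.

Lemma pmulC n (a b : pauli n) : pmul a b = pmul b a.
Proof. by apply/ffunP=> i; rewrite !ffunE /pmul1 addbC [zbit (b i) (+) _]addbC. Qed.

Definition within_two n (G : {set pauli n}) (x z : pauli n) : Prop :=
  [\/ x = z, anticommute x z
    | exists2 w, w \in G & anticommute w x && anticommute w z].

Section LieClosedFrustration.

Variables (n : nat) (G : {set pauli n}).
Hypothesis closedG : lie_closed G G G.

Lemma within_two_cons x y z :
  y \in G -> anticommute x y -> within_two G y z -> within_two G x z.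
Proof.
move=> yG axy yz; case: (eqVneq x z) => [->|_]; first exact: Or31.
case axz: (anticommute x z); first exact: Or32.
apply: Or33; case ayz: (anticommute y z).
  by exists y; rewrite // anticommuteC axy.
case: yz => [eyz|ayz'|[w wG /andP[awy awz]]].
- by rewrite -eyz axy in axz.
- by rewrite ayz in ayz'.
- case awx: (anticommute w x); first by exists w; rewrite ?awx.
  exists (pmul w y); first exact: closedG.
  by rewrite !anticommute_pmull awx awz ayz anticommuteC axy.
Qed.

Lemma connect_frustration_within_two x z :
  connect (frustration G) x z -> within_two G x z.
Proof.
move/connectP=> [p]; elim: p x => [|y p IH] x /=; first by move=> _ ->; apply: Or31.
move=> /andP[/and3P[_ yG axy] yp] ez.
exact: within_two_cons yG axy (IH y yp ez).
Qed.

End LieClosedFrustration.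

Lemma pauli_cartan_lie_closed n (K M : {set pauli n}) :
  pauli_cartan K M -> lie_closed (K :|: M) (K :|: M) (K :|: M).
Proof.
case=> _ _ hKK hMM hKM a b; rewrite !inE => /orP[aK|aM] /orP[bK|bM] ab.
- by rewrite hKK.
- by rewrite hKM ?orbT.
- by rewrite pmulC hKM ?orbT // anticommuteC.
- by rewrite hMM.
Qed.

Lemma ksub12_neq0 n (K M : {set pauli n}) (b1 b2 w : pauli n) :
  lie_closed M M K -> b1 \in M -> b2 \in M -> commute b1 b2 ->
  w \in K :|: M -> anticommute w b1 -> anticommute w b2 ->
  ksub K [:: b1; b2] [::] != set0.
Proof.
move=> hMM b1M b2M cb12; rewrite inE => /orP[wK|wM] wb1 wb2; apply/set0Pn.
  by exists w; rewrite !inE wK /= wb1 wb2.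
exists (pmul w b1); rewrite !inE hMM //= !anticommute_pmull wb1 wb2 anticommutexx.
by rewrite (negbTE cb12).
Qed.

Theorem corollaryC1 (n : nat) (K M : {set pauli n}) (b1 b2 : pauli n) :
  pauli_cartan K M ->
  b1 \in M -> b2 \in M -> b1 != b2 -> commute b1 b2 ->
  connect (frustration (K :|: M)) b1 b2 ->
  ksub K [:: b1; b2] [::] != set0.
Proof.
move=> cartanKM b1M b2M nb12 cb12.
move/(connect_frustration_within_two (pauli_cartan_lie_closed cartanKM)).
case=> [e12|ab12|[w wG /andP[wb1 wb2]]].
- by rewrite e12 eqxx in nb12.
- by rewrite /commute ab12 in cb12.
- have [_ _ _ hMM _] := cartanKM.
  exact: ksub12_neq0 hMM b1M b2M cb12 wG wb1 wb2.
Qed.
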